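(* Let $\epsilon_1,\epsilon_2,\dots$ be independent Rademacher random variables and $S_m=\epsilon_1+\dots+\epsilon_m$ (with $S_0=0$). For $n\ge1$ define the intervals $$A_n=[-1-\sqrt n,\,-\sqrt{n-1}),\qquad B_n=[-\sqrt{n-1},\,1-\sqrt n).$$ Let $k\ge 2$ be an integer. Then: (i) For $n=k^2-1$: $-k\in A_n=[-1-\sqrt{k^2-1},-\sqrt{k^2-2})$, and $$\mathbb{P}\{S_{n-1}\in A_n\}=\mathbb{P}\{S_{k^2-2}=k\}=\binom{k^2-2}{k(k-1)/2-1}2^{-(k^2-2)},\qquad \mathbb{P}\{S_{n-1}\in B_n\}=0.$$ (ii) For $n=k^2+2i$ with $i\in\{0,1,\dots,k-1\}$: $-1-k\in A_n=[-1-\sqrt{k^2+2i},-\sqrt{k^2+2i-1})$, and $$\mathbb{P}\{S_{n-1}\in A_n\}=\mathbb{P}\{S_{k^2+2i-1}=k+1\}=\binom{k^2+2i-1}{k(k-1)/2+i-1}2^{-(k^2+2i-1)},\qquad \mathbb{P}\{S_{n-1}\in B_n\}=0.$$ (iii) For $n=k^2+1+2i$ with $i\in\{0,1,\dots,k-1\}$: $-k\in B_n=[-\sqrt{k^2+2i},1-\sqrt{k^2+1+2i})$, and $$\mathbb{P}\{S_{n-1}\in B_n\}=\mathbb{P}\{S_{k^2+2i}=k\}=\binom{k^2+2i}{k(k-1)/2+i}2^{-(k^2+2i)},\qquad \mathbb{P}\{S_{n-1}\in A_n\}=0.$$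
   Context: A Rademacher random variable takes the values $1$ and $-1$ each with probability $1/2$. *)

From HB Require Import structures.
From mathcomp Require Import all_boot all_order all_algebra.
From mathcomp Require Import all_classical all_reals all_analysis.
Set Implicit Arguments. Unset Strict Implicit. Unset Printing Implicit Defensive.
Import Order.TTheory GRing.Theory Num.Theory.
Local Open Scope classical_set_scope.
Local Open Scope ring_scope.

Section Defs.
Context {R : realType} {d : measure_display} {T : measurableType d}.

Definition rademacher (P : probability T R) (X : T -> R) : Prop :=
  P [set t | X t = 1] = (1 / 2 : R)%:E /\ P [set t | X t = -1] = (1 / 2 : R)%:E.

Definition mutually_independent (P : probability T R) (eps : nat -> T -> R) : Prop :=
  forall (n : nat) (B : nat -> set R), (forall i, measurable (B i)) ->
    P (\bigcap_(i in `I_n) (eps i @^-1` B i)) = (\prod_(i < n) P (eps i @^-1` B i))%E.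

Definition Ssum (eps : nat -> T -> R) (m : nat) : T -> R :=
  fun t => \sum_(i < m) eps i t.
End Defs.

Definition Aint {R : realType} (n : nat) : set R :=
  `[(-1 - Num.sqrt (n%:R : R)), (- Num.sqrt (n%:R - 1 : R))[.
Definition Bint {R : realType} (n : nat) : set R :=
  `[(- Num.sqrt (n%:R - 1 : R)), (1 - Num.sqrt (n%:R : R))[.

(* On the event that every eps_i is +1 or -1, which has probability one, the
   walk is determined by the set s of indices with eps_i = 1: then
   S_m = 2|s| - m, and each of the 2^m sign patterns has probability 2^-m.
   Hence P{S_m in A} = sum over t <= m with 2t - m in A of C(m,t) 2^-m.
   Writing a' and a for the integer square roots of n - 1 and n, the lattice
   point 2t - m lies in A_n or B_n iff t satisfies two linear inequalities in
   a', a, m; with m = n - 1 and k^2 = 2 (k(k-1)/2) + k, each case leaves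
   exactly one t for one interval and none for the other (the parity of m
   rules out the neighbouring lattice point). *)

From HB Require Import structures.
From mathcomp Require Import all_boot all_order all_algebra.
From mathcomp Require Import all_classical all_reals all_analysis.
From mathcomp Require Import lra zify.
Set Implicit Arguments. Unset Strict Implicit. Unset Printing Implicit Defensive.
Import Order.TTheory GRing.Theory Num.Theory.
Local Open Scope classical_set_scope.
Local Open Scope ring_scope.

Lemma measure_bigsetU_finType {d} {T : measurableType d} {R : realType}
    (mu : {measure set T -> \bar R}) (I : finType) (F : I -> set T) :
  (forall i, measurable (F i)) -> (forall i j, i != j -> F i `&` F j = set0) ->
  mu (\big[setU/set0]_i F i) = (\sum_i mu (F i))%E.
Proof.
move=> mF dF.
rewrite [in LHS](big_enum_val (A := predT)) [in RHS](big_enum_val (A := predT)) /=.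
rewrite measure_bigsetU_ord // => i j _ _ [t Ft]; case: (eqVneq i j) => // ij.
by move: Ft; rewrite dF // (inj_eq enum_val_inj).
Qed.

Lemma probability_setIl_eq1 {d} {T : measurableType d} {R : realType}
    (P : probability T R) (A B : set T) :
  measurable A -> measurable B -> P B = 1%E -> P (A `&` B) = P A.
Proof.
move=> mA mB PB1; rewrite (measureDI P mA mB) -[LHS]add0e; congr (_ + _)%E.
apply/esym/le_anti; rewrite measure_ge0 andbT.
have <- : P (~` B) = 0%E by rewrite probability_setC // PB1 subee.
by apply: le_measure; rewrite ?inE; [exact: measurableD | exact: measurableC | move=> t []].
Qed.

Lemma sum_set_card (V : nmodType) m (F : nat -> V) :
  \sum_(s : {set 'I_m}) F #|s| = \sum_(t < m.+1) F t *+ 'C(m, t).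
Proof.
have card_lt (s : {set 'I_m}) : (#|s| < m.+1)%N.
  by rewrite ltnS -[m in (_ <= m)%N]card_ord max_card.
rewrite (partition_big (fun s : {set 'I_m} => inord #|s| : 'I_m.+1) xpredT) //=.
apply: eq_bigr => t _; rewrite (eq_bigr (fun=> F t)) => [|s /eqP <-]; last by rewrite inordK.
rewrite sumr_const -[m in 'C(m, _)]card_ord -card_draws cardsE; congr (_ *+ #|_|).
apply/funext => s /=; apply/eqP/eqP => [<-|st]; first by rewrite inordK.
by rewrite st inord_val.
Qed.

Lemma leq_sqr_window a b x : (a ^ 2 <= b < a.+1 ^ 2)%N -> (x ^ 2 <= b)%N = (x <= a)%N.
Proof.
move=> /andP[ab ba]; apply/idP/idP => [xb | xa]; last by rewrite (leq_trans _ ab) ?leq_sqr.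
by rewrite -ltnS -ltn_sqr (leq_ltn_trans xb ba).
Qed.

Lemma ler_natB_sqrt (R : rcfType) a b u v : (a ^ 2 <= b < a.+1 ^ 2)%N ->
  (u%:R - v%:R <= Num.sqrt b%:R :> R) = (u <= a + v)%N.
Proof.
move=> ab; case: (leqP u v) => [uv | vu].
  rewrite (leq_trans uv (leq_addl _ _)); apply: le_trans (sqrtr_ge0 _).
  by rewrite subr_le0 ler_nat.
rewrite -natrB ?(ltnW vu) // -[leLHS]ger0_norm // -sqrtr_sqr -natrX ler_sqrt // ler_nat.
by rewrite (leq_sqr_window _ ab) leq_subLR addnC.
Qed.

Lemma AintE (R : realType) n (x : R) : (0 < n)%N ->
  Aint n x <-> -1 - Num.sqrt n%:R <= x < - Num.sqrt n.-1%:R.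
Proof. by move=> n0; rewrite /Aint /= in_itv /= -[in n%:R - 1](prednK n0) -natr1 addrK. Qed.

Lemma BintE (R : realType) n (x : R) : (0 < n)%N ->
  Bint n x <-> - Num.sqrt n.-1%:R <= x < 1 - Num.sqrt n%:R.
Proof. by move=> n0; rewrite /Bint /= in_itv /= -[in n%:R - 1](prednK n0) -natr1 addrK. Qed.

Lemma Aint_lattice (R : realType) n a a' m t : (0 < n)%N ->
  (a' ^ 2 <= n.-1 < a'.+1 ^ 2)%N -> (a ^ 2 <= n < a.+1 ^ 2)%N ->
  Aint n ((2 * t)%:R - m%:R : R) <-> (a' + 2 * t < m)%N /\ (m <= a + (2 * t).+1)%N.
Proof.
move=> n0 a'n an; rewrite AintE //.
have -> : (-1 - Num.sqrt n%:R <= (2 * t)%:R - m%:R :> R)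
    = (m%:R - (2 * t).+1%:R <= Num.sqrt n%:R :> R) by rewrite -natr1; apply/idP/idP; lra.
have -> : ((2 * t)%:R - m%:R < - Num.sqrt n.-1%:R :> R)
    = ~~ (m%:R - (2 * t)%:R <= Num.sqrt n.-1%:R :> R) by rewrite -ltNge; apply/idP/idP; lra.
by rewrite (ler_natB_sqrt _ _ _ a'n) (ler_natB_sqrt _ _ _ an) -ltnNge; split=> [/andP[] | []] -> ->.
Qed.

Lemma Bint_lattice (R : realType) n a a' m t : (0 < n)%N ->
  (a' ^ 2 <= n.-1 < a'.+1 ^ 2)%N -> (a ^ 2 <= n < a.+1 ^ 2)%N ->
  Bint n ((2 * t)%:R - m%:R : R) <-> (m <= a' + 2 * t)%N /\ (a + 2 * t < m.+1)%N.
Proof.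
move=> n0 a'n an; rewrite BintE //.
have -> : (- Num.sqrt n.-1%:R <= (2 * t)%:R - m%:R :> R)
    = (m%:R - (2 * t)%:R <= Num.sqrt n.-1%:R :> R) by apply/idP/idP; lra.
have -> : ((2 * t)%:R - m%:R < 1 - Num.sqrt n%:R :> R)
    = ~~ (m.+1%:R - (2 * t)%:R <= Num.sqrt n%:R :> R) by rewrite -ltNge -natr1; apply/idP/idP; lra.
by rewrite (ler_natB_sqrt _ _ _ a'n) (ler_natB_sqrt _ _ _ an) -ltnNge; split=> [/andP[] | []] -> ->.
Qed.

Lemma sqr_half_split k : (k ^ 2 = 2 * (k * (k - 1) %/ 2) + k)%N.
Proof.
have even_k : (2 %| k * (k - 1))%N.
  by case: k => // k; rewrite subn1 dvdn2 oddM /=; case: (odd k).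
by rewrite mulnC divnK //; nia.
Qed.

Section RademacherWalk.
Context {R : realType} {d : measure_display} {T : measurableType d}.
Variables (P : probability T R) (eps : nat -> T -> R).
Hypothesis meps : forall i, measurable_fun setT (eps i).
Hypothesis rad : forall i, rademacher P (eps i).
Hypothesis ind : mutually_independent P eps.

Let measurable_eps_preimage i (A : set R) : measurable A -> measurable (eps i @^-1` A).
Proof. by move=> mA; rewrite -[X in measurable X]setTI; exact: meps. Qed.

Definition sign_event {m} (s : {set 'I_m}) : set T :=
  \bigcap_(i in `I_m) eps i @^-1` [set if i \in [seq val j | j in s] then 1 else -1].

Definition pm1_event m : set T := \bigcap_(i in `I_m) eps i @^-1` [set 1; -1].

Lemma sign_eventP m (s : {set 'I_m}) t :
  sign_event s t <-> forall j : 'I_m, eps j t = if j \in s then 1 else -1.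
Proof.
have memE (j : 'I_m) : (val j \in [seq val j | j in s]) = (j \in s).
  by apply: fintype.mem_image; exact: val_inj.
split=> [Et j | Et i /= im]; first by rewrite -memE; exact: (Et j (ltn_ord j)).
by have /= := Et (Ordinal im); rewrite -memE.
Qed.

Lemma measurable_sign_event m (s : {set 'I_m}) : measurable (sign_event s).
Proof.
apply: fin_bigcap_measurable; first exact: finite_II.
by move=> i _; apply: measurable_eps_preimage; exact: measurable_set1.
Qed.

Lemma prob_sign_event m (s : {set 'I_m}) : P (sign_event s) = ((1 / 2) ^+ m)%:E.
Proof.
rewrite /sign_event ind => [|i]; last exact: measurable_set1.
rewrite (eq_bigr (fun=> (1 / 2)%:E)) => [|i _]; first by rewrite prodEFin prodr_const card_ord.
by case: ifP => _; [exact: (rad i).1 | exact: (rad i).2].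
Qed.

Lemma measurable_pm1_event m : measurable (pm1_event m).
Proof.
apply: fin_bigcap_measurable; first exact: finite_II.
by move=> i _; apply/measurable_eps_preimage/measurableU; exact: measurable_set1.
Qed.

Lemma prob_pm1_event m : P (pm1_event m) = 1%E.
Proof.
rewrite /pm1_event ind => [|i]; last by apply: measurableU; exact: measurable_set1.
rewrite big1 // => i _; rewrite preimage_setU measureU /=.
- by rewrite (rad i).1 (rad i).2 -EFinD -splitr.
- by apply: measurable_eps_preimage; exact: measurable_set1.
- by apply: measurable_eps_preimage; exact: measurable_set1.
- by apply/seteqP; split=> t //= [-> h]; move: h; lra.
Qed.

Lemma sign_event_disj m (s s' : {set 'I_m}) : s != s' -> sign_event s `&` sign_event s' = set0.
Proof.
move=> ss'; apply/seteqP; split=> t // [/sign_eventP E /sign_eventP E'].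
apply: (negP ss'); apply/eqP/setP => j; move: (E j) (E' j) => ->.
by case: (j \in s); case: (j \in s') => // h; move: h; lra.
Qed.

Lemma pm1_event_bigsetU m : pm1_event m = \big[setU/set0]_(s : {set 'I_m}) sign_event s.
Proof.
rewrite -bigcup_seq; apply/seteqP; split=> t.
  move=> pm1; exists [set j : 'I_m | eps j t == 1]%SET; first exact: mem_index_enum.
  apply/sign_eventP => j; rewrite inE; have [|] := pm1 j (ltn_ord j); first by move=> ->; rewrite eqxx.
  by move=> ->; case: eqP => // h; move: h; lra.
move=> [s _ /sign_eventP Es] i /= im; have /= := Es (Ordinal im).
by case: (Ordinal im \in s) => ->; [left | right].
Qed.

Lemma Ssum_sign_event m (s : {set 'I_m}) t :
  sign_event s t -> Ssum eps m t = (2 * #|s|)%:R - m%:R.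
Proof.
move/sign_eventP=> Es; rewrite /Ssum (eq_bigr _ (fun j _ => Es j)).
rewrite (eq_bigr (fun j : 'I_m => (if j \in s then 2 else 0) - 1)) => [|j _]; last first.
  by case: (j \in s); lra.
by rewrite sumrB -big_mkcond /= !sumr_const card_ord natrM mulr_natr.
Qed.

Lemma measurable_Ssum_preimage m (A : set R) :
  measurable A -> measurable (Ssum eps m @^-1` A).
Proof.
move=> mA; rewrite -[X in measurable X]setTI.
by apply: (_ : measurable_fun setT (Ssum eps m)) => //; exact: measurable_sum.
Qed.

Lemma prob_Ssum_preimage_sets m (A : set R) : measurable A ->
  P (Ssum eps m @^-1` A)
    = (\sum_(s : {set 'I_m} | `[< A ((2 * #|s|)%:R - m%:R) >]) (1 / 2) ^+ m)%:E.
Proof.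
move=> mA; have mX := measurable_Ssum_preimage m mA.
rewrite -(probability_setIl_eq1 mX (measurable_pm1_event m) (prob_pm1_event m)).
rewrite pm1_event_bigsetU big_distrr /= measure_bigsetU_finType; last 2 first.
- by move=> s; exact/measurableI/measurable_sign_event.
- by move=> s s' ss'; rewrite setIACA sign_event_disj // setI0.
rewrite -sumEFin [RHS]big_mkcond /=; apply: eq_bigr => s _.
have [As|nAs] := asboolP.
  by rewrite -(prob_sign_event s) setIidr // => t /Ssum_sign_event; rewrite /preimage /= => ->.
rewrite -(measure0 P); congr (P _); apply/seteqP; split=> t // [XAt /Ssum_sign_event St].
by apply: nAs; rewrite -St.
Qed.

Lemma prob_Ssum_preimage m (A : set R) : measurable A ->
  P (Ssum eps m @^-1` A)
    = (\sum_(t < m.+1 | `[< A ((2 * t)%:R - m%:R) >]) 'C(m, t)%:R / 2 ^+ m)%:E.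
Proof.
move=> mA; rewrite prob_Ssum_preimage_sets // big_mkcond /=.
rewrite (sum_set_card _ (fun t => if `[< A ((2 * t)%:R - m%:R) >] then (1 / 2) ^+ m else 0)).
rewrite [in RHS]big_mkcond /=; congr (_%:E); apply: eq_bigr => t _.
by case: ifP => _; rewrite ?mul0rn // expr_div_n expr1n mulrnAl.
Qed.

Lemma prob_Ssum_preimage_single m t0 (A : set R) : measurable A -> (t0 <= m)%N ->
  (forall t, (t <= m)%N -> A ((2 * t)%:R - m%:R) <-> t = t0) ->
  P (Ssum eps m @^-1` A) = ('C(m, t0)%:R / 2 ^+ m)%:E.
Proof.
move=> mA t0m At; rewrite prob_Ssum_preimage // (big_pred1 (inord t0)) ?inordK // => t.
have tm : (t <= m)%N by rewrite -ltnS.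
apply/asboolP/eqP => [/(At _ tm) <- | tt0]; first by rewrite inord_val.
by apply/(At _ tm); rewrite tt0 inordK.
Qed.

Lemma prob_Ssum_preimage_none m (A : set R) : measurable A ->
  (forall t, (t <= m)%N -> ~ A ((2 * t)%:R - m%:R)) -> P (Ssum eps m @^-1` A) = 0%E.
Proof.
move=> mA nA; rewrite prob_Ssum_preimage // big_pred0 // => t.
by apply/asboolP/(nA t); rewrite -ltnS.
Qed.

Lemma Ssum_single_lattice_point m j t0 (I J : set R) :
  measurable I -> measurable J -> (2 * t0 + j = m)%N ->
  (forall t, (t <= m)%N -> I ((2 * t)%:R - m%:R) <-> t = t0) ->
  (forall t, (t <= m)%N -> ~ J ((2 * t)%:R - m%:R)) ->
  [/\ I (- j%:R), P (Ssum eps m @^-1` I) = P (Ssum eps m @^-1` [set j%:R]),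
      P (Ssum eps m @^-1` [set j%:R]) = ('C(m, t0)%:R / 2 ^+ m)%:E
    & P (Ssum eps m @^-1` J) = 0%E].
Proof.
move=> mI mJ t0jm It nJ; have t0m : (t0 <= m)%N by lia.
have Pj : P (Ssum eps m @^-1` [set j%:R]) = ('C(m, t0)%:R / 2 ^+ m)%:E.
  rewrite -bin_sub // (@prob_Ssum_preimage_single m (m - t0)) ?leq_subr // => t _.
  rewrite /=; split=> [/eqP | tE]; first by rewrite subr_eq -natrD eqr_nat => /eqP; lia.
  by apply/eqP; rewrite subr_eq -natrD eqr_nat; apply/eqP; lia.
split=> //; last exact: prob_Ssum_preimage_none.
- have -> : - j%:R = (2 * t0)%:R - m%:R :> R by rewrite -t0jm natrD opprD addNKr.
  exact/(It _ t0m).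
- by rewrite Pj; exact: prob_Ssum_preimage_single.
Qed.
End RademacherWalk.

Theorem lemma2p1 (R : realType) (d : measure_display) (T : measurableType d)
  (P : probability T R) (eps : nat -> T -> R) :
  (forall i, measurable_fun setT (eps i)) ->
  (forall i, rademacher P (eps i)) ->
  mutually_independent P eps ->
  forall k : nat, (2 <= k)%N ->
  [/\
   (* (i) n = k^2 - 1 *)
   (let n := (k ^ 2 - 1)%N in
    [/\ Aint n (- (k%:R : R)),
        P (Ssum eps n.-1 @^-1` Aint n) = P (Ssum eps (k ^ 2 - 2)%N @^-1` [set (k%:R : R)]),
        P (Ssum eps (k ^ 2 - 2)%N @^-1` [set (k%:R : R)])
          = ('C(k ^ 2 - 2, k * (k - 1) %/ 2 - 1)%:R / 2 ^+ (k ^ 2 - 2) : R)%:E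
      & P (Ssum eps n.-1 @^-1` Bint n) = 0%E]),
   (* (ii) n = k^2 + 2i *)
   (forall i : nat, (i < k)%N ->
    let n := (k ^ 2 + 2 * i)%N in
    [/\ Aint n (- 1 - (k%:R : R)),
        P (Ssum eps n.-1 @^-1` Aint n)
          = P (Ssum eps (k ^ 2 + 2 * i - 1)%N @^-1` [set (k.+1%:R : R)]),
        P (Ssum eps (k ^ 2 + 2 * i - 1)%N @^-1` [set (k.+1%:R : R)])
          = ('C(k ^ 2 + 2 * i - 1, k * (k - 1) %/ 2 + i - 1)%:R
              / 2 ^+ (k ^ 2 + 2 * i - 1) : R)%:E
      & P (Ssum eps n.-1 @^-1` Bint n) = 0%E])
 & (* (iii) n = k^2 + 1 + 2i *)
   (forall i : nat, (i < k)%N ->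
    let n := (k ^ 2 + 1 + 2 * i)%N in
    [/\ Bint n (- (k%:R : R)),
        P (Ssum eps n.-1 @^-1` Bint n)
          = P (Ssum eps (k ^ 2 + 2 * i)%N @^-1` [set (k%:R : R)]),
        P (Ssum eps (k ^ 2 + 2 * i)%N @^-1` [set (k%:R : R)])
          = ('C(k ^ 2 + 2 * i, k * (k - 1) %/ 2 + i)%:R / 2 ^+ (k ^ 2 + 2 * i) : R)%:E
      & P (Ssum eps n.-1 @^-1` Aint n) = 0%E])].
Proof.
move=> meps rad ind k k2.
have kk := sqr_half_split k; set c := (k * (k - 1) %/ 2)%N in kk *.
have c0 : (0 < c)%N by nia.
have mA n : measurable (Aint n : set R) by exact: measurable_itv.
have mB n : measurable (Bint n : set R) by exact: measurable_itv.
split.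
- move=> n; rewrite /n (_ : (k ^ 2 - 1).-1 = k ^ 2 - 2)%N; last by lia.
  apply: (Ssum_single_lattice_point (t0 := c - 1) meps rad ind) => // [|t _|t _]; first by lia.
  + by rewrite (@Aint_lattice R _ (k - 1) (k - 1)); [split=> [[]|->]; lia | nia ..].
  + by rewrite (@Bint_lattice R _ (k - 1) (k - 1)); [case; lia | nia ..].
- move=> i ik n; rewrite /n (_ : (k ^ 2 + 2 * i).-1 = k ^ 2 + 2 * i - 1)%N; last by lia.
  (* the integer square root of k^2 + 2i - 1 drops to k - 1 when i = 0 *)
  have [a' a'n a'k] : exists2 a', (a' ^ 2 <= (k ^ 2 + 2 * i).-1 < a'.+1 ^ 2)%N
      & (a' = k /\ 0 < i \/ a'.+1 = k /\ i = 0)%N.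
    by case: i ik {n} => [|i] ik; [exists (k - 1)%N; [nia | lia] | exists k; [nia | lia]].
  rewrite (_ : -1 - k%:R = - k.+1%:R :> R); last by rewrite -natr1 opprD addrC.
  apply: (Ssum_single_lattice_point (t0 := c + i - 1) meps rad ind) => // [|t _|t _]; first by lia.
  + by rewrite (@Aint_lattice R _ k a'); [split=> [[]|->]; lia | nia ..].
  + by rewrite (@Bint_lattice R _ k a'); [case; lia | nia ..].
- move=> i ik n; rewrite /n (_ : (k ^ 2 + 1 + 2 * i).-1 = k ^ 2 + 2 * i)%N; last by lia.
  apply: (Ssum_single_lattice_point (t0 := c + i) meps rad ind) => // [|t _|t _]; first by lia.
  + by rewrite (@Bint_lattice R _ k k); [split=> [[]|->]; lia | nia ..].
  + by rewrite (@Aint_lattice R _ k k); [case; lia | nia ..].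
Qed.
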